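(* The class of liberal extensions is Morita invariant: if $A/B$ is a liberal extension and $A/B$ is Morita equivalent to $A'/B'$, then $A'/B'$ is a liberal extension.
   Context: All rings have identity, subrings contain the identity, modules are unital; a ring extension $A/B$ means $B$ is a subring of $A$. $V_A(B)=\{a\in A\mid ba=ab \text{ for all } b\in B\}$. $A/B$ is a liberal extension if there are finitely many $v_1,\dots,v_n\in V_A(B)$ with $A=\sum_{i=1}^n v_iB$. For bimodules ${}_AX_{A'}$, ${}_AY_{A'}$, write $X\mid Y$ if $X$ is isomorphic to a direct summand of a finite direct sum of copies of $Y$, and $X\sim Y$ if $X\mid Y$ and $Y\mid X$. $\mathrm{End}^r({}_AM)$ denotes the ring of left $A$-endomorphisms of $M$ acting on the right. A bimodule ${}_AM_{A'}$ is a Morita module if ${}_AM\sim{}_AA$ and $\mathrm{End}^r({}_AM)=A'$. Ring extensions $A/B$ and $A'/B'$ are Morita equivalent if there exist Morita modules ${}_AM_{A'}$ and ${}_BN_{B'}$ with ${}_AA\otimes_BN_{B'}\cong{}_AM_{B'}$. A class $\mathscr C$ of ring extensions is Morita invariant if whenever $A/B\in\mathscr C$ and $A/B$ is Morita equivalent to $A'/B'$, then $A'/B'\in\mathscr C$. *)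

(* Rings are arbitrary (possibly noncommutative) unital rings
   (pzRingType); a ring extension A/B is encoded by an injective unital ring
   morphism iota : B -> A (B identified with its image, a subring of A). *)
From HB Require Import structures.
From mathcomp Require Import all_boot all_order all_algebra.
Set Implicit Arguments. Unset Strict Implicit. Unset Printing Implicit Defensive.
Import GRing.Theory.
Local Open Scope ring_scope.

Record Lmod (R : pzRingType) := {
  lm_car :> zmodType;
  lm_act : R -> lm_car -> lm_car;
  lm_actDr : forall r x y, lm_act r (x + y) = lm_act r x + lm_act r y;
  lm_actDl : forall r s x, lm_act (r + s) x = lm_act r x + lm_act s x;
  lm_actA : forall r s x, lm_act (r * s) x = lm_act r (lm_act s x);
  lm_act1 : forall x, lm_act 1 x = x
}.

Record Bimod (R S : pzRingType) := {
  bm_car :> zmodType;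
  bm_lact : R -> bm_car -> bm_car;
  bm_ract : bm_car -> S -> bm_car;
  bm_lactDr : forall r x y, bm_lact r (x + y) = bm_lact r x + bm_lact r y;
  bm_lactDl : forall r s x, bm_lact (r + s) x = bm_lact r x + bm_lact s x;
  bm_lactA : forall r s x, bm_lact (r * s) x = bm_lact r (bm_lact s x);
  bm_lact1 : forall x, bm_lact 1 x = x;
  bm_ractDl : forall x y s, bm_ract (x + y) s = bm_ract x s + bm_ract y s;
  bm_ractDr : forall x s t, bm_ract x (s + t) = bm_ract x s + bm_ract x t;
  bm_ractA : forall x s t, bm_ract x (s * t) = bm_ract (bm_ract x s) t;
  bm_ract1 : forall x, bm_ract x 1 = x;
  bm_lractA : forall r x s, bm_lact r (bm_ract x s) = bm_ract (bm_lact r x) s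
}.

Definition lmod_of (R S : pzRingType) (M : Bimod R S) : Lmod R :=
  @Build_Lmod R M (@bm_lact R S M) (@bm_lactDr R S M) (@bm_lactDl R S M)
    (@bm_lactA R S M) (@bm_lact1 R S M).

Definition regular_lmod (R : pzRingType) : Lmod R :=
  @Build_Lmod R R (fun r x => r * x) (fun r x y => mulrDr r x y)
    (fun r s x => mulrDl r s x) (fun r s x => esym (mulrA r s x)) (fun x => mul1r x).

Definition lmod_hom (R : pzRingType) (X Y : Lmod R) (f : X -> Y) : Prop :=
  (forall x y, f (x + y) = f x + f y) /\
  (forall r x, f (lm_act r x) = lm_act r (f x)).

(* Y^n is represented as functions 'I_n -> Y with componentwise structure. *)
Definition lmod_divides (R : pzRingType) (X Y : Lmod R) : Prop :=
  exists (n : nat) (f : X -> 'I_n -> Y) (g : ('I_n -> Y) -> X),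
    [/\ (forall x y i, f (x + y) i = f x i + f y i),
        (forall r x i, f (lm_act r x) i = lm_act r (f x i)),
        (forall u v, g (fun i => u i + v i) = g u + g v),
        (forall r u, g (fun i => lm_act r (u i)) = lm_act r (g u)) &
        (forall x, g (f x) = x)].

Definition lmod_sim (R : pzRingType) (X Y : Lmod R) : Prop :=
  lmod_divides X Y /\ lmod_divides Y X.

(* End^r({}_R M) = S : the map S -> End^r({}_R M), s |-> (m |-> m s), is
   bijective. *)
Definition end_is (R S : pzRingType) (M : Bimod R S) : Prop :=
  forall phi : M -> M, lmod_hom (X := lmod_of M) (Y := lmod_of M) phi ->
    exists! s : S, forall m, phi m = bm_ract m s.

Definition morita_module (R S : pzRingType) (M : Bimod R S) : Prop :=
  lmod_sim (lmod_of M) (regular_lmod R) /\ end_is M.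

Definition centralizes (A B : pzRingType) (iota : {rmorphism B -> A}) (v : A) :=
  forall b : B, iota b * v = v * iota b.

Definition liberal (A B : pzRingType) (iota : {rmorphism B -> A}) : Prop :=
  exists (n : nat) (v : 'I_n -> A),
    (forall i, centralizes iota (v i)) /\
    (forall a : A, exists c : 'I_n -> B, a = \sum_(i < n) v i * iota (c i)).

(* {}_A A (x)_B N_{B'} ~= {}_A M_{B'} as A-B' bimodules, expressed through the
   universal property of the tensor product: there is a B-balanced biadditive
   map beta : A x N -> M, A-linear on the left and B'-linear on the right
   (B' acting on M through iota'), through which every B-balanced biadditive
   map A x N -> Z (Z an abelian group) factors uniquely by an additive map. *)
Definition tensor_iso (A B A' B' : pzRingType)
  (iota : {rmorphism B -> A}) (iota' : {rmorphism B' -> A'})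
  (M : Bimod A A') (N : Bimod B B') : Prop :=
  exists beta : A -> N -> M,
  [/\ (forall a1 a2 n, beta (a1 + a2) n = beta a1 n + beta a2 n),
      (forall a n1 n2, beta a (n1 + n2) = beta a n1 + beta a n2),
      (forall a b n, beta (a * iota b) n = beta a (bm_lact b n)),
      (forall x a n, beta (x * a) n = bm_lact x (beta a n)) /\
      (forall a n b', beta a (bm_ract n b') = bm_ract (beta a n) (iota' b')) &
      (forall (Z : zmodType) (gam : A -> N -> Z),
         (forall a1 a2 n, gam (a1 + a2) n = gam a1 n + gam a2 n) ->
         (forall a n1 n2, gam a (n1 + n2) = gam a n1 + gam a n2) ->
         (forall a b n, gam (a * iota b) n = gam a (bm_lact b n)) ->
         (exists h : M -> Z, (forall m1 m2, h (m1 + m2) = h m1 + h m2) /\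
                             (forall a n, h (beta a n) = gam a n)) /\
         (forall h1 h2 : M -> Z,
            (forall m1 m2, h1 (m1 + m2) = h1 m1 + h1 m2) ->
            (forall m1 m2, h2 (m1 + m2) = h2 m1 + h2 m2) ->
            (forall a n, h1 (beta a n) = gam a n) ->
            (forall a n, h2 (beta a n) = gam a n) ->
            forall m, h1 m = h2 m))].

Definition morita_equivalent (A B A' B' : pzRingType)
  (iota : {rmorphism B -> A}) (iota' : {rmorphism B' -> A'}) : Prop :=
  exists (M : Bimod A A') (N : Bimod B B'),
    [/\ morita_module M, morita_module N & tensor_iso iota iota' M N].

(* Write M = A (x)_B N.  Since A = sum_i v_i B with v_i centralizing B, M is
   the sum of the subgroups beta(v_i, N), and right multiplication by v_i on A
   induces an A-endomorphism of M, i.e. the right action of some v'_i in A'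
   centralizing B'.  Given a' in A', the B-linear map x |-> beta(1, x) a' from
   N to M takes values in sum_i beta(v_i, N); since N is a direct summand of
   some B^k, it factors as x |-> sum_i beta(v_i, x c_i) with c_i in
   End(_B N) = B'.  Hence m a' = m (sum_i v'_i c_i) for every m in M, and
   a' = sum_i v'_i c_i because End(_A M) = A' acts faithfully on M. *)
From HB Require Import structures.
From mathcomp Require Import all_boot all_order all_algebra.
From mathcomp Require Import boolp.
Set Implicit Arguments. Unset Strict Implicit. Unset Printing Implicit Defensive.
Import GRing.Theory.
Local Open Scope ring_scope.
Local Open Scope quotient_scope.

Section AdditiveMaps.
Variables (X Y : zmodType) (f : X -> Y) (fD : {morph f : x y / x + y}).

Lemma addf0 : f 0 = 0.
Proof. by apply: (addrI (f 0)); rewrite -fD !addr0. Qed.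

Lemma addfB x y : f (x - y) = f x - f y.
Proof. by apply: (addIr (f y)); rewrite -fD !subrK. Qed.

Lemma addf_sum I r (P : pred I) (F : I -> X) :
  f (\sum_(i <- r | P i) F i) = \sum_(i <- r | P i) f (F i).
Proof. exact: (big_morph f fD addf0). Qed.

End AdditiveMaps.

Section SubgroupQuotient.
Variables (M : zmodType) (S : M -> Prop).
Hypotheses (S0 : S 0) (SB : forall x y, S x -> S y -> S (x - y)).

Let S_pred : {pred M} := fun m => `[< S m >].

Let S_pred_closed : zmod_closed S_pred.
Proof.
split; first exact/asboolP.
by move=> x y /asboolP Sx /asboolP Sy; apply/asboolP; apply: SB.
Qed.

HB.instance Definition _ := GRing.isZmodClosed.Build M S_pred S_pred_closed.

(* Apply the hypothesis to the projection onto the quotient M / S. *)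
Lemma subgroup_full :
  (forall (Z : zmodType) (h : M -> Z), {morph h : x y / x + y} ->
     (forall m, S m -> h m = 0) -> forall m, h m = 0) ->
  forall m, S m.
Proof.
pose pi := \pi_(Quotient.quot S_pred).
have pi_ker m : (pi m == 0) = (m \in S_pred).
  by rewrite -[m in RHS]subr0 Quotient.idealrBE raddf0.
move=> coker_trivial m; suff : m \in S_pred by move/asboolP.
rewrite -pi_ker; apply/eqP.
apply: coker_trivial => [x y | {}m Sm]; first exact: raddfD.
by apply/eqP; rewrite pi_ker; apply/asboolP.
Qed.

End SubgroupQuotient.

Lemma end_is_ract_inj (R S : pzRingType) (M : Bimod R S) :
  end_is M -> forall s t : S, (forall m : M, bm_ract m s = bm_ract m t) -> s = t.
Proof.
move=> endM s t est.
have [u [_ u_uniq]] := endM (fun m => bm_ract m s)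
  (conj (fun x y => bm_ractDl (x : M) y s) (fun r m => esym (bm_lractA r (m : M) s))).
by rewrite -(u_uniq s (fun=> erefl)); apply: u_uniq.
Qed.

Section RestrictScalars.
Variables (R S : pzRingType) (f : {rmorphism S -> R}) (X : Lmod R).

Fact restrict_actDl s t (x : X) : lm_act (f (s + t)) x = lm_act (f s) x + lm_act (f t) x.
Proof. by rewrite rmorphD lm_actDl. Qed.

Fact restrict_actA s t (x : X) : lm_act (f (s * t)) x = lm_act (f s) (lm_act (f t) x).
Proof. by rewrite rmorphM lm_actA. Qed.

Fact restrict_act1 (x : X) : lm_act (f 1) x = x.
Proof. by rewrite rmorph1 lm_act1. Qed.

Definition restrict_lmod : Lmod S :=
  @Build_Lmod S X (fun s => lm_act (f s)) (fun s => lm_actDr (f s))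
    restrict_actDl restrict_actA restrict_act1.

End RestrictScalars.

Lemma regular_pow_linE (R : pzRingType) (X : Lmod R) (k : nat)
    (g : ('I_k -> R) -> X) :
  (forall u v, g (fun i => u i + v i) = g u + g v) ->
  (forall r u, g (fun i => r * u i) = lm_act r (g u)) ->
  forall u, g u = \sum_j lm_act (u j) (g (fun i => (i == j)%:R)).
Proof.
move=> gD gA u.
have g0 : g (fun=> 0) = 0.
  apply: (addIr (g (fun=> 0))); rewrite add0r -gD.
  by congr g; apply: funext => i; rewrite addr0.
have g_sum r (F : 'I_k -> 'I_k -> R) :
    g (fun i => \sum_(j <- r) F j i) = \sum_(j <- r) g (F j).
  elim: r => [|j r IHr].
    by rewrite big_nil -g0; congr g; apply: funext => i; rewrite big_nil.
  by rewrite big_cons -IHr -gD; congr g; apply: funext => i; rewrite big_cons.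
transitivity (g (fun i => \sum_j u j * (i == j)%:R)).
  congr g; apply: funext => i; rewrite (bigD1 i) //= eqxx mulr1 big1 ?addr0 // => j.
  by rewrite eq_sym => /negbTE->; rewrite mulr0.
by rewrite g_sum; apply: eq_bigr => j _; apply: gA.
Qed.

Lemma generator_factorization (R S : pzRingType) (N : Bimod R S) (P : Lmod R)
    (n : nat) (phi : 'I_n -> N -> P) (psi : N -> P) :
  lmod_divides (lmod_of N) (regular_lmod R) -> end_is N ->
  (forall i, lmod_hom (X := lmod_of N) (phi i)) -> lmod_hom (X := lmod_of N) psi ->
  (forall x, exists w : 'I_n -> N, psi x = \sum_i phi i (w i)) ->
  exists c : 'I_n -> S, forall x, psi x = \sum_i phi i (bm_ract x (c i)).
Proof.
move=> [k [f [g [fD fA gD gA gf]]]] endN phi_hom [psiD psiA] psi_span.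
pose delta j := g (fun i => (i == j)%:R).
have [W WP] := choice (fun j : 'I_k => psi_span (delta j)).
pose theta i x := \sum_j bm_lact (f x j) (W j i).
have theta_hom i : lmod_hom (X := lmod_of N) (Y := lmod_of N) (theta i).
  split=> [x y | r x]; rewrite /theta /=.
    by rewrite -big_split; apply: eq_bigr => j _; rewrite fD bm_lactDl.
  rewrite (addf_sum (bm_lactDr r)); apply: eq_bigr => j _.
  by rewrite (fA r x j) bm_lactA.
have theta_ract i : exists c : S, forall x, theta i x = bm_ract x c.
  by have [c [cE _]] := endN _ (theta_hom i); exists c.
have [c cP] := choice theta_ract.
exists c => x; rewrite -{1}(gf x) (regular_pow_linE gD gA) (addf_sum psiD).
under eq_bigr => j _ do rewrite psiA WP (addf_sum (lm_actDr _)).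
rewrite exchange_big; apply: eq_bigr => i _ /=.
by rewrite -cP (addf_sum (phi_hom i).1); apply: eq_bigr => j _; rewrite (phi_hom i).2.
Qed.

Section TensorProduct.
Variables (A B A' B' : pzRingType).
Variables (iota : {rmorphism B -> A}) (iota' : {rmorphism B' -> A'}).
Variables (M : Bimod A A') (N : Bimod B B') (beta : A -> N -> M).

Definition balanced_biadditive (Z : zmodType) (gam : A -> N -> Z) :=
  [/\ forall a1 a2 x, gam (a1 + a2) x = gam a1 x + gam a2 x,
      forall a, {morph gam a : x y / x + y} &
      forall a b x, gam (a * iota b) x = gam a (bm_lact b x)].

Hypothesis betaDl : forall a1 a2 x, beta (a1 + a2) x = beta a1 x + beta a2 x.
Hypothesis betaDr : forall a, {morph beta a : x y / x + y}.
Hypothesis beta_balanced : forall a b x, beta (a * iota b) x = beta a (bm_lact b x).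
Hypothesis betaA : forall a0 a x, beta (a0 * a) x = bm_lact a0 (beta a x).
Hypothesis beta_ract : forall a x b', beta a (bm_ract x b') = bm_ract (beta a x) (iota' b').

Hypothesis beta_lift : forall (Z : zmodType) (gam : A -> N -> Z),
  balanced_biadditive gam ->
  exists h : M -> Z, {morph h : x y / x + y} /\ forall a x, h (beta a x) = gam a x.

Hypothesis beta_lift_unique : forall (Z : zmodType) (gam : A -> N -> Z),
  balanced_biadditive gam -> forall h1 h2 : M -> Z,
  {morph h1 : x y / x + y} -> {morph h2 : x y / x + y} ->
  (forall a x, h1 (beta a x) = gam a x) -> (forall a x, h2 (beta a x) = gam a x) ->
  h1 =1 h2.

Lemma tensor_ext (Z : zmodType) (h1 h2 : M -> Z) :
  {morph h1 : x y / x + y} -> {morph h2 : x y / x + y} ->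
  (forall a x, h1 (beta a x) = h2 (beta a x)) -> h1 =1 h2.
Proof.
move=> h1D h2D e; apply: (beta_lift_unique (gam := fun a x => h1 (beta a x))) => //.
by split=> [a1 a2 x | a x y | a b x]; rewrite ?betaDl ?betaDr ?beta_balanced ?h1D.
Qed.

Lemma beta_lact a x : beta a x = bm_lact a (beta 1 x).
Proof. by rewrite -betaA mulr1. Qed.

Lemma tensor_generated (S : M -> Prop) :
  S 0 -> (forall m1 m2, S m1 -> S m2 -> S (m1 - m2)) ->
  (forall a x, S (beta a x)) -> forall m, S m.
Proof.
move=> S0 SB S_beta; apply: subgroup_full => // Z h hD h_S m.
by apply: (tensor_ext hD (fun _ _ => esym (addr0 0))) => a x; apply: h_S.
Qed.

Lemma tensor_span (n : nat) (v : 'I_n -> A) :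
  (forall a, exists c : 'I_n -> B, a = \sum_i v i * iota (c i)) ->
  forall m, exists w : 'I_n -> N, m = \sum_i beta (v i) (w i).
Proof.
move=> v_span; apply: tensor_generated.
- by exists (fun=> 0); rewrite big1 // => i _; rewrite (addf0 (betaDr _)).
- move=> _ _ [w1 ->] [w2 ->]; exists (fun i => w1 i - w2 i).
  by rewrite -sumrB; apply: eq_bigr => i _; rewrite (addfB (betaDr _)).
- move=> a x; have [c ->] := v_span a; exists (fun i => bm_lact (c i) x).
  rewrite (addf_sum (f := beta^~ x) (fun a1 a2 => betaDl a1 a2 x)).
  by apply: eq_bigr => i _; rewrite beta_balanced.
Qed.

Lemma centralizer_ract (v : A) : end_is M -> centralizes iota v ->
  exists v' : A', centralizes iota' v' /\
    forall a x, bm_ract (beta a x) v' = beta (a * v) x.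
Proof.
move=> endM vC.
have gam_bal : balanced_biadditive (fun a x => beta (a * v) x).
  split=> [a1 a2 x | a | a b x]; first by rewrite mulrDl betaDl.
    exact: betaDr.
  by rewrite -mulrA vC mulrA beta_balanced.
have [h [hD hE]] := beta_lift gam_bal.
have hA : lmod_hom (X := lmod_of M) (Y := lmod_of M) h.
  split=> // a0; apply: tensor_ext => [x y | x y | a x] /=.
  - by rewrite bm_lactDr hD.
  - by rewrite hD bm_lactDr.
  - by rewrite -betaA !hE -betaA mulrA.
have [v' [v'E _]] := endM h hA.
exists v'; split=> [b' | a x]; last by rewrite -v'E hE.
apply: (end_is_ract_inj endM) => m; rewrite !bm_ractA -!v'E.
apply: (tensor_ext (h1 := fun m => h (bm_ract m (iota' b')))
                   (h2 := fun m => bm_ract (h m) (iota' b'))) => [x y | x y | a x] /=.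
- by rewrite bm_ractDl hD.
- by rewrite hD bm_ractDl.
- by rewrite -beta_ract !hE beta_ract.
Qed.

Lemma tensor_liberal :
  end_is M -> lmod_divides (lmod_of N) (regular_lmod B) -> end_is N ->
  liberal iota -> liberal iota'.
Proof.
move=> endM dN endN [n [v [vC v_span]]].
have [v' v'P] := choice (fun i => centralizer_ract endM (vC i)).
exists n, v'; split=> [i | a']; first exact: (v'P i).1.
pose MB := restrict_lmod iota (lmod_of M).
have phi_hom i : lmod_hom (X := lmod_of N) (Y := MB) (beta (v i)).
  split=> [|b x /=]; first exact: betaDr.
  by rewrite -beta_balanced -vC betaA.
have psi_hom : lmod_hom (X := lmod_of N) (Y := MB) (fun x => bm_ract (beta 1 x) a').
  split=> [x y | b x] /=; first by rewrite betaDr bm_ractDl.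
  by rewrite -beta_balanced mul1r beta_lact bm_lractA.
have [c cP] := generator_factorization dN endN phi_hom psi_hom
  (fun x => tensor_span v_span _).
exists c; apply: (end_is_ract_inj endM).
apply: tensor_ext => [x y | x y | a x]; rewrite ?bm_ractDl //.
rewrite beta_lact -bm_lractA cP (addf_sum (bm_lactDr a)) (addf_sum (bm_ractDr _)).
by apply: eq_bigr => i _; rewrite bm_ractA -beta_lact (v'P i).2 -beta_ract betaA.
Qed.

End TensorProduct.

Theorem proposition3p2 (A B A' B' : pzRingType)
  (iota : {rmorphism B -> A}) (iota' : {rmorphism B' -> A'}) :
  injective iota -> injective iota' ->
  liberal iota -> morita_equivalent iota iota' -> liberal iota'.
Proof.
move=> _ _ lib [M [N [[_ endM] [[dN _] endN] tensorMN]]].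
have [beta [betaDl betaDr bal [betaA beta_ract] univ]] := tensorMN.
apply: (tensor_liberal betaDl betaDr bal betaA beta_ract _ _ endM dN endN lib)
  => Z gam [gDl gDr gbal]; by have [] := univ Z gam gDl gDr gbal.
Qed.
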